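(* Let $R$ be a finite commutative chain ring with maximal ideal $M=\langle a\rangle$, where $a$ has nilpotency index $t$, and residue field $\mathbb F_q$. Let $\mu=(\mu_1,\dots,\mu_r)\in H_1\times\dots\times H_r$ and let $I_\mu=\langle q_{\mu,1},z_{\mu,2},\dots,z_{\mu,r}\rangle\lhd R[X_1,\dots,X_r]$. Then $R[X_1,\dots,X_r]/I_\mu$ is a finite commutative chain ring with maximal ideal $\langle a+I_\mu\rangle$, residue field $\mathbb F_q(\mu_1,\dots,\mu_r)$, and its ideals are precisely $$\langle 0\rangle=\langle a^t+I_\mu\rangle\subsetneq\langle a^{t-1}+I_\mu\rangle\subsetneq\dots\subsetneq\langle a+I_\mu\rangle\subsetneq\langle a^0+I_\mu\rangle .$$
   Context: A finite commutative chain ring is a finite commutative local ring whose ideals are totally ordered by inclusion (equivalently, its maximal ideal is principal). Reduction modulo $M$, $r\mapsto\bar r$, is extended coefficientwise to polynomials. Let $\mathbb F$ be an algebraic closure of $\mathbb F_q$. For $i=1,\dots,r$, $t_i(X_i)\in R[X_i]$ is a monic polynomial such that $\bar t_i$ is square-free (has no repeated roots in $\mathbb F$), and $H_i\subseteq\mathbb F$ is the set of roots of $\bar t_i$. For $\mu\in H_1\times\dots\times H_r$: $p_{\mu,i}\in\mathbb F_q[X_i]$ is the minimal polynomial of $\mu_i$ over $\mathbb F_q$; for $i\ge2$, $w_{\mu,i}$ is the minimal polynomial of $\mu_i$ over $\mathbb F_q(\mu_1,\dots,\mu_{i-1})$ and $\pi_{\mu,i}=p_{\mu,i}/w_{\mu,i}$.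 By Hensel's lemma, $q_{\mu,i}\in R[X_i]$ is the unique monic factor of $t_i(X_i)$ with $\bar q_{\mu,i}=p_{\mu,i}$. Inductively, let $R_0=R$ and $R_{i-1}=R[X_1,\dots,X_{i-1}]/\langle q_{\mu,1},z_{\mu,2},\dots,z_{\mu,i-1}\rangle$ (a local ring with residue field $\mathbb F_q(\mu_1,\dots,\mu_{i-1})$, in which the image $\theta_j$ of $X_j$ lifts $\mu_j$); in $R_{i-1}[X_i]$ the monic polynomial $q_{\mu,i}$ reduces to the product of the coprime factors $w_{\mu,i}\pi_{\mu,i}$, so by Hensel's lemma $q_{\mu,i}=z_{\mu,i}\sigma_{\mu,i}$ with $z_{\mu,i},\sigma_{\mu,i}\in R_{i-1}[X_i]$ monic, coprime, reducing to $w_{\mu,i},\pi_{\mu,i}$. The polynomials $z_{\mu,i},\sigma_{\mu,i}$ are regarded as elements of $R[X_1,\dots,X_i]$ by replacing $\theta_j$ by $X_j$ (for fixed representatives of the coefficients). *)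

From HB Require Import structures.
From mathcomp Require Import all_boot all_order all_algebra.
From mathcomp Require Import mpoly.

Set Implicit Arguments.
Unset Strict Implicit.
Unset Printing Implicit Defensive.

Import Order.TTheory GRing.Theory.
Local Open Scope ring_scope.

Section Ideals.
Variable S : comPzRingType.

Definition is_ideal (J : S -> Prop) : Prop :=
  [/\ J 0, (forall x y, J x -> J y -> J (x + y)) &
      (forall c x, J x -> J (c * x))].

Definition principal (x : S) : S -> Prop := fun y => exists c, y = c * x.

Definition ideal_sub (J K : S -> Prop) : Prop := forall x, J x -> K x.
Definition ideal_eq (J K : S -> Prop) : Prop := forall x, J x <-> K x.

Definition is_maximal_ideal (J : S -> Prop) : Prop :=
  [/\ is_ideal J, ~ J 1 &
      forall K, is_ideal K -> ideal_sub J K -> ideal_eq K J \/ K 1].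


Definition local_ring : Prop :=
  exists M, is_maximal_ideal M /\
    forall N, is_maximal_ideal N -> ideal_eq N M.

Definition finite_ring : Prop := exists s : seq S, forall x : S, x \in s.

Definition chain_ring : Prop :=
  [/\ finite_ring, local_ring &
      forall J K, is_ideal J -> is_ideal K -> ideal_sub J K \/ ideal_sub K J].
End Ideals.

Section Fields.
Variable F : fieldType.

Definition is_subfield (K : F -> Prop) : Prop :=
  K 0 /\ K 1 /\ (forall x y, K x -> K y -> K (x + y)) /\
  (forall x, K x -> K (- x)) /\
  (forall x y, K x -> K y -> K (x * y)) /\
  (forall x, K x -> x != 0 -> K x^-1).

Definition gen_subfield (A : F -> Prop) : F -> Prop :=
  fun x => forall K, is_subfield K -> (forall y, A y -> K y) -> K x.

Definition is_minpoly (K : F -> Prop) (p : {poly F}) (x : F) : Prop :=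
  [/\ p \is monic, (forall j, K p`_j), root p x &
      forall g : {poly F}, g != 0 -> (forall j, K g`_j) -> root g x ->
        (size p <= size g)%N].
End Fields.

Section MPolyDefs.
Variables (r : nat) (R : comNzRingType).

Definition vars_below (i : nat) (p : {mpoly R[r]}) : Prop :=
  forall m, m \in msupp p -> forall j : 'I_r, (i <= j)%N -> m j = 0%N.

Definition monic_in (i : 'I_r) (p : {mpoly R[r]}) : Prop :=
  exists (d : nat) (c : nat -> {mpoly R[r]}),
    (forall k, vars_below i (c k)) /\
    p = 'X_i ^+ d + \sum_(k < d) c k * 'X_i ^+ k.

Definition liftX (i : 'I_r) (g : {poly R}) : {mpoly R[r]} :=
  (map_poly (@mpolyC r R) g).['X_i].

Definition in_ideal_gen (P : 'I_r -> bool) (gens : 'I_r -> {mpoly R[r]})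
  (p : {mpoly R[r]}) : Prop :=
  exists c : 'I_r -> {mpoly R[r]}, p = \sum_(j < r | P j) c j * gens j.
End MPolyDefs.

Section Reduction.
Variables (r : nat) (R : comNzRingType) (F : fieldType).
Variables (pi : {rmorphism R -> F}) (mu : 'I_r -> F).

(* Reduction of an element of R[X_1..X_{i-1}][X_i] to the residue field
   F_q(mu_1..mu_{i-1})[X_i]: reduce coefficients mod M, send X_j to mu_j
   for j < i and keep X_i as the variable. *)
Definition red (i : 'I_r) (p : {mpoly R[r]}) : {poly F} :=
  mmap (fun c => (pi c)%:P)
       (fun j : 'I_r => if (j < i)%N then (mu j)%:P
                        else if j == i then 'X else 0) p.

(* F_q(mu_j | j < i) inside F, where F_q = pi(R) *)
Definition Fq_adj (i : nat) : F -> Prop :=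
  gen_subfield (fun y => (exists c, y = pi c) \/
                         (exists j : 'I_r, (j < i)%N /\ y = mu j)).
End Reduction.

(* Every generator of I_mu is monic of positive degree d_j in X_j over
   R[X_0, ..., X_(j-1)], so the image of R[X_0, ..., X_j] in S is spanned by the
   powers x_j^k, k < d_j, over the image of R[X_0, ..., X_(j-1)]; hence S is finite.
   Sending X_j to mu_j kills I_mu and gives a residue map S -> F onto F_q(mu).
   Its kernel is aS: if sum_k g_k x_j^k has residue 0, then sum_k res(g_k) X^k has
   degree < d_j, coefficients in F_q(mu_0, ..., mu_(j-1)) and the root mu_j, so it
   vanishes because the reduced generator is the minimal polynomial of mu_j; now
   induct on j. As a is nilpotent, everything outside aS is a unit, so S is local
   with maximal ideal aS and its ideals are the a^k S. Finally a^k <> 0 in S for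
   k < t: adjoining to R a root of each generator in turn (in a quotient
   {poly B} %/ h) yields a ring containing R in which every generator vanishes,
   so I_mu contains no nonzero constant. *)

From HB Require Import structures.
From mathcomp Require Import all_boot all_order all_algebra.
From mathcomp Require Import mpoly.
From Stdlib Require Import Classical.

Set Implicit Arguments.
Unset Strict Implicit.
Unset Printing Implicit Defensive.

Import GRing.Theory.
Local Open Scope ring_scope.

Lemma size_Xn_add_poly (B : nzRingType) d (b : nat -> B) :
  size ('X^d + \poly_(k < d) b k) = d.+1.
Proof. by rewrite size_polyDl size_polyXn // ltnS size_poly. Qed.

Lemma monic_Xn_add_poly (B : nzRingType) d (b : nat -> B) :
  'X^d + \poly_(k < d) b k \is monic.
Proof. by rewrite monicE lead_coefDl ?lead_coefXn // size_polyXn ltnS size_poly. Qed.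

Lemma sum_polyC_mulXn (B : nzRingType) d (b : nat -> B) :
  \sum_(k < d) (b k)%:P * 'X^k = \poly_(k < d) b k.
Proof. by rewrite poly_def; apply: eq_bigr => k _; rewrite mul_polyC. Qed.

Lemma root_extension (B : comNzRingType) (h : {poly B}) :
  h \is monic -> (1 < size h)%N ->
  exists (B' : comNzRingType) (e : {rmorphism B -> B'}) (y : B'),
    injective e /\ (map_poly e h).[y] = 0.
Proof.
move=> h_monic h_size; exists {poly %/ h}, (qpolyC h), (in_qpoly h 'X); split.
  by move=> x x' /(congr1 val) /polyC_inj.
have in_qpolyC c : in_qpoly h c%:P = qpolyC h c.
  apply: val_inj; rewrite /= Pdiv.CommonRing.rmodp_small //.
  by rewrite (leq_ltn_trans (size_polyC_leq1 c)) // size_mk_monic_gt1.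
have -> : (map_poly (qpolyC h) h).[in_qpoly h 'X] = in_qpoly h h.
  rewrite (poly_initial (in_qpoly h) h) /horner_morph; congr (_.[_]).
  by apply: eq_map_poly => c /=; rewrite in_qpolyC.
apply: val_inj; rewrite /= /mk_monic h_size h_monic.
exact: Pdiv.RingMonic.rmodpp.
Qed.

Lemma finite_span (S : pzSemiRingType) (L : seq S) (y : S) d :
  exists L' : seq S, forall g : nat -> S,
    (forall k, g k \in L) -> \sum_(k < d) g k * y ^+ k \in L'.
Proof.
elim: d => [|d [L' L'P]]; first by exists [:: 0] => g _; rewrite big_ord0 mem_seq1.
exists [seq s + l * y ^+ d | s <- L', l <- L] => g gL.
by rewrite big_ord_recr /= (allpairs_f (fun s l => s + l * y ^+ d)) ?L'P.
Qed.

Lemma finite_ring_exp_period (S : comPzRingType) (s : S) :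
  finite_ring S -> exists i m, s ^+ (i + m.+1) = s ^+ i.
Proof.
move=> [L LP]; pose pows := [seq s ^+ k | k <- iota 0 (size L).+1].
have : ~~ uniq pows.
  apply/negP => /uniq_leq_size /(_ (fun x _ => LP x)).
  by rewrite size_map size_iota ltnn.
case/(uniqPn 0) => i [j [lt_ij]]; rewrite size_map size_iota => lt_j.
have lt_i := ltn_trans lt_ij lt_j.
rewrite !(nth_map 0%N) ?size_iota // !nth_iota // !add0n => pow_ij.
by exists i, (j - i.+1)%N; rewrite addnS -addSn subnKC.
Qed.

Lemma rmorph_finite_inv (S : comPzRingType) (F : fieldType) (g : {rmorphism S -> F}) s :
  finite_ring S -> g s != 0 -> exists v, g v = (g s)^-1.
Proof.
move=> S_fin gs_neq0; have [i [m pow_eq]] := finite_ring_exp_period s S_fin.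
exists (s ^+ m); apply: (mulfI gs_neq0); rewrite mulfV // -rmorphM -exprS.
apply: (mulfI (expf_neq0 i gs_neq0)).
by rewrite mulr1 -rmorphXn -rmorphM -exprD pow_eq.
Qed.

Lemma one_sub_nilpotent_unit (S : comPzRingType) (x : S) t :
  x ^+ t = 0 -> exists v, (1 - x) * v = 1.
Proof.
move=> x_nil; exists (\sum_(k < t) x ^+ k).
by rewrite -opprB mulNr -subrX1 x_nil sub0r opprK.
Qed.

Lemma principal_ideal (S : comPzRingType) (b : S) : is_ideal (principal b).
Proof.
split; first by exists 0; rewrite mul0r.
  by move=> _ _ [c ->] [c' ->]; exists (c + c'); rewrite mulrDl.
by move=> c _ [c' ->]; exists (c * c'); rewrite mulrA.
Qed.

Section PrincipalChain.
Variables (S : comPzRingType) (b : S) (t : nat).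
Hypothesis b_nil : b ^+ t = 0.
Hypothesis b_proper : ~ principal b 1.
Hypothesis unit_outside : forall x, ~ principal b x -> exists v, x * v = 1.

Lemma principal_maximal : is_maximal_ideal (principal b).
Proof.
split; [exact: principal_ideal | exact: b_proper |].
move=> K [_ _ KM] b_sub.
case: (classic (exists2 x, K x & ~ principal b x)) => [[x Kx /unit_outside [v xv]] | K_sub].
  by right; rewrite -xv mulrC; apply: KM.
by left=> x; split=> [Kx | /b_sub //]; apply: NNPP => x_notin; apply: K_sub; exists x.
Qed.

Lemma principal_local : local_ring S.
Proof.
exists (principal b); split; first exact: principal_maximal.
move=> N [[_ _ NM] N1 N_max].
have N_sub : ideal_sub N (principal b).
  move=> x Nx; apply: NNPP => /unit_outside [v xv].
  by apply: N1; rewrite -xv mulrC; apply: NM.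
have [E | /b_proper //] := N_max _ (principal_ideal b) N_sub.
by move=> x; split => [/N_sub | /E].
Qed.

Lemma principal_exp_sub k k' :
  (k <= k')%N -> ideal_sub (principal (b ^+ k')) (principal (b ^+ k)).
Proof. by move=> le_kk' _ [c ->]; exists (c * b ^+ (k' - k)); rewrite -mulrA -exprD subnK. Qed.

Lemma ideal_eq_principal_exp K m : is_ideal K ->
  ideal_sub K (principal (b ^+ m)) -> ~ ideal_sub K (principal (b ^+ m.+1)) ->
  ideal_eq K (principal (b ^+ m)).
Proof.
move=> [_ _ KM] K_sub K_nsub.
have [y Ky y_notin] : exists2 y, K y & ~ principal (b ^+ m.+1) y.
  apply: NNPP => no_y; apply: K_nsub => y Ky.
  by apply: NNPP => y_notin; apply: no_y; exists y.
have [c yE] := K_sub y Ky.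
have [v cv] : exists v, c * v = 1.
  apply: unit_outside => [[c' cE]]; apply: y_notin.
  by exists c'; rewrite yE cE -mulrA -exprS.
move=> x; split=> [/K_sub // | [d ->]].
have -> : b ^+ m = v * y by rewrite yE mulrA [v * c]mulrC cv mul1r.
by rewrite mulrA; apply: KM.
Qed.

Lemma ideals_principal_exp K :
  is_ideal K -> exists k, (k <= t)%N /\ ideal_eq K (principal (b ^+ k)).
Proof.
move=> K_ideal.
have : forall m, (m <= t)%N -> (exists k, (k <= t)%N /\ ideal_eq K (principal (b ^+ k)))
                               \/ ideal_sub K (principal (b ^+ m)).
  elim=> [_ | m IH lt_mt]; first by right=> x _; exists x; rewrite expr0 mulr1.
  case: (IH (ltnW lt_mt)) => [found | K_sub]; first by left.
  case: (classic (ideal_sub K (principal (b ^+ m.+1)))) => [| K_nsub]; first by right.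
  by left; exists m; split; [exact: ltnW | exact: ideal_eq_principal_exp].
case/(_ t (leqnn t)) => // K_sub; exists t; split=> // x; split=> [/K_sub // | [c ->]].
by rewrite b_nil mulr0; case: K_ideal.
Qed.

Lemma principal_chain_ring : finite_ring S -> chain_ring S.
Proof.
move=> S_fin; split=> //; first exact: principal_local.
move=> J K /ideals_principal_exp [k [_ J_eq]] /ideals_principal_exp [k' [_ K_eq]].
case: (leqP k k') => [le_kk' | /ltnW le_k'k].
  by right=> x /K_eq /(principal_exp_sub le_kk') /J_eq.
by left=> x /J_eq /(principal_exp_sub le_k'k) /K_eq.
Qed.

Lemma principal_exp_succ_eq0 k : principal (b ^+ k.+1) (b ^+ k) -> b ^+ k = 0.
Proof.
move=> [c bkE].
have [v cb_inv] : exists v, (1 - c * b) * v = 1.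
  apply: unit_outside => [[d dE]]; apply: b_proper.
  by exists (d + c); rewrite mulrDl -dE subrK.
have bk_cb : b ^+ k * (1 - c * b) = 0 by rewrite mulrBr mulr1 mulrCA -exprSr -bkE subrr.
by rewrite -[b ^+ k]mulr1 -cb_inv mulrA bk_cb mul0r.
Qed.

End PrincipalChain.

Section GeneratedSubfield.
Variables (F : fieldType) (A : F -> Prop).

Lemma gen_subfield_gen y : A y -> gen_subfield A y.
Proof. by move=> Ay K _; apply. Qed.

Lemma gen_subfield0 : gen_subfield A 0.
Proof. by move=> K [K0 _]. Qed.

Lemma gen_subfieldD y y' :
  gen_subfield A y -> gen_subfield A y' -> gen_subfield A (y + y').
Proof.
move=> Ay Ay' K K_sub AK; have [_ [_ [KD _]]] := K_sub.
by apply: KD; [apply: Ay | apply: Ay'].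
Qed.

Lemma gen_subfieldM y y' :
  gen_subfield A y -> gen_subfield A y' -> gen_subfield A (y * y').
Proof.
move=> Ay Ay' K K_sub AK; have [_ [_ [_ [_ [KM _]]]]] := K_sub.
by apply: KM; [apply: Ay | apply: Ay'].
Qed.

End GeneratedSubfield.

Section Mmap.
Variables (r : nat) (R : comNzRingType).

Definition monic_in_deg (i : 'I_r) (d : nat) (p : {mpoly R[r]}) : Prop :=
  exists c : nat -> {mpoly R[r]},
    (forall k, vars_below i (c k)) /\ p = 'X_i ^+ d + \sum_(k < d) c k * 'X_i ^+ k.

Lemma eq_mmap (B : nzRingType) (e e' : R -> B) (h h' : 'I_r -> B) p :
  e =1 e' -> h =1 h' -> mmap e h p = mmap e' h' p.
Proof.
move=> ee' hh'; apply: eq_bigr => m _; rewrite ee'; congr (_ * _).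
exact: mmap1_eq.
Qed.

Lemma eq_mmap_vars_below (B : nzRingType) (e : R -> B) (h h' : 'I_r -> B) i p :
  vars_below i p -> (forall k : 'I_r, (k < i)%N -> h k = h' k) ->
  mmap e h p = mmap e h' p.
Proof.
move=> p_below hh'; apply: eq_big_seq => m m_supp; congr (_ * _).
apply: eq_bigr => k _; case: (ltnP k i) => [/hh' -> // | ik].
by rewrite (p_below m m_supp k ik) !expr0.
Qed.

Lemma rmorph_mmap (B C : comNzRingType) (e : R -> B) (h : 'I_r -> B)
    (g : {rmorphism B -> C}) p :
  g (mmap e h p) = mmap (g \o e) (g \o h) p.
Proof.
rewrite rmorph_sum; apply: eq_bigr => m _.
by rewrite rmorphM rmorph_prod; congr (_ * _); apply: eq_bigr => k _; rewrite rmorphXn.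
Qed.

Lemma rmorph_mpolyE (B : comPzRingType) (g : {rmorphism {mpoly R[r]} -> B}) p :
  g p = \sum_(m <- msupp p) g (p@_m)%:MP * \prod_(k < r) g 'X_k ^+ m k.
Proof.
rewrite {1}(mpolyE p) rmorph_sum; apply: eq_bigr => m _.
rewrite -mul_mpolyC rmorphM mpolyXE_id rmorph_prod; congr (_ * _).
by apply: eq_bigr => k _; rewrite rmorphXn.
Qed.

Lemma mmap_monic_form (B : comNzRingType) (e : {rmorphism R -> B}) (h : 'I_r -> B)
    (j : 'I_r) d (c : nat -> {mpoly R[r]}) :
  mmap e h ('X_j ^+ d + \sum_(k < d) c k * 'X_j ^+ k) =
  h j ^+ d + \sum_(k < d) mmap e h (c k) * h j ^+ k.
Proof.
rewrite rmorphD rmorphXn rmorph_sum /= mmapX mmap1U; congr (_ + _).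
by apply: eq_bigr => k _; rewrite rmorphM rmorphXn /= mmapX mmap1U.
Qed.

Lemma eq_mmap_monic_in (B : comNzRingType) (e : {rmorphism R -> B}) (h h' : 'I_r -> B)
    (j : 'I_r) d p :
  monic_in_deg j d p -> (forall k : 'I_r, (k <= j)%N -> h k = h' k) ->
  mmap e h p = mmap e h' p.
Proof.
move=> [c [c_below ->]] hh'; rewrite !mmap_monic_form (hh' j (leqnn j)).
congr (_ + _); apply: eq_bigr => k _; congr (_ * _).
by apply: eq_mmap_vars_below (c_below k) _ => l /ltnW; apply: hh'.
Qed.

End Mmap.

Section TriangularSystem.
Variables (r : nat) (R : comNzRingType) (gens : 'I_r -> {mpoly R[r]}).
Hypothesis gens_monic : forall j, exists2 d, (0 < d)%N & monic_in_deg j d (gens j).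

Lemma triangular_root_step (B : comNzRingType) (e : {rmorphism R -> B}) (x : 'I_r -> B)
    (i : 'I_r) :
  injective e -> (forall j : 'I_r, (j < i)%N -> mmap e x (gens j) = 0) ->
  exists (B' : comNzRingType) (e' : {rmorphism R -> B'}) (x' : 'I_r -> B'),
    injective e' /\ forall j : 'I_r, (j <= i)%N -> mmap e' x' (gens j) = 0.
Proof.
move=> e_inj x_root; have [d d_gt0 [c [c_below gensE]]] := gens_monic i.
pose ys k : {poly B} := if k == i then 'X else (x k)%:P.
pose h := mmap (polyC \o e) ys (gens i).
have hE : h = 'X^d + \poly_(k < d) mmap e x (c k).
  rewrite -sum_polyC_mulXn /h gensE mmap_monic_form /ys eqxx; congr (_ + _).
  apply: eq_bigr => k _; congr (_ * _); rewrite [RHS]rmorph_mmap.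
  apply: eq_mmap_vars_below (c_below k) _ => l /ltn_eqF lt_li.
  by rewrite /ys -val_eqE /= lt_li.
have h_monic : h \is monic by rewrite hE monic_Xn_add_poly.
have h_size : (1 < size h)%N by rewrite hE size_Xn_add_poly ltnS.
have [B' [e' [y [e'_inj hy]]]] := root_extension h_monic h_size.
pose x' k := if k == i then y else e' (x k).
exists B', (e' \o e)%FUN, x'; split; first exact: inj_comp.
move=> j; rewrite leq_eqVlt => /orP [/eqP/val_inj -> | lt_ji].
  rewrite -hy -[RHS]/((horner_eval y \o map_poly e') h) /h rmorph_mmap.
  apply: eq_mmap => [b | k] /=; rewrite ?horner_evalE ?map_polyC ?hornerC //.
  by rewrite /ys /x'; case: eqP => _; rewrite ?map_polyX ?hornerX ?map_polyC ?hornerC.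
rewrite -(rmorph0 e') -(x_root j lt_ji) rmorph_mmap.
have [dj _ monic_j] := gens_monic j.
apply: (@eq_mmap_monic_in _ _ _ (e' \o e)%FUN _ _ _ _ _ monic_j).
move=> k le_kj; rewrite /x' /= ifN // -val_eqE /=.
by rewrite neq_ltn (leq_ltn_trans le_kj lt_ji).
Qed.

Lemma triangular_root k : (k <= r)%N ->
  exists (B : comNzRingType) (e : {rmorphism R -> B}) (x : 'I_r -> B),
    injective e /\ forall j : 'I_r, (j < k)%N -> mmap e x (gens j) = 0.
Proof.
elim: k => [_ | k IH lt_kr]; first by exists R, idfun, (fun=> 0); split=> // j; rewrite ltn0.
have [B [e [x [e_inj x_root]]]] := IH (ltnW lt_kr).
have [B' [e' [x' [e'_inj x'_root]]]] :=
  @triangular_root_step _ _ _ (Ordinal lt_kr) e_inj x_root.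
by exists B', e', x'; split => // j; rewrite ltnS; apply: x'_root.
Qed.

Lemma constant_in_ideal_eq0 c : in_ideal_gen xpredT gens c%:MP -> c = 0.
Proof.
move=> [coef cE]; have [B [e [x [e_inj x_root]]]] := triangular_root (leqnn r).
apply: e_inj; rewrite rmorph0 -(mmapC x) cE rmorph_sum big1 // => j _.
by rewrite rmorphM /= x_root ?mulr0.
Qed.

End TriangularSystem.

Section TriangularQuotient.
Variables (r : nat) (R : comNzRingType) (gens : 'I_r -> {mpoly R[r]}).
Hypothesis gens_monic : forall j, exists2 d, (0 < d)%N & monic_in_deg j d (gens j).
Variables (S : comPzRingType) (f : {rmorphism {mpoly R[r]} -> S}).
Hypothesis f_surj : forall s, exists p, f p = s.
Hypothesis f_gens : forall j, f (gens j) = 0.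

(* The subring R[x_k | k < i] of S, where x_k = f 'X_k. *)
Definition adjoined (i : nat) (s : S) : Prop :=
  forall T : S -> Prop,
    (forall u v, T u -> T v -> T (u + v)) -> (forall u v, T u -> T v -> T (u * v)) ->
    (forall c, T (f c%:MP)) -> (forall k : 'I_r, (k < i)%N -> T (f 'X_k)) -> T s.

Lemma adjoinedD i u v : adjoined i u -> adjoined i v -> adjoined i (u + v).
Proof. by move=> Tu Tv T TD TM TC TX; apply: TD (Tu T TD TM TC TX) (Tv T TD TM TC TX). Qed.

Lemma adjoinedM i u v : adjoined i u -> adjoined i v -> adjoined i (u * v).
Proof. by move=> Tu Tv T TD TM TC TX; apply: TM (Tu T TD TM TC TX) (Tv T TD TM TC TX). Qed.

Lemma adjoinedC i c : adjoined i (f c%:MP).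
Proof. by move=> T _ _ TC _; apply: TC. Qed.

Lemma adjoined0 i : adjoined i 0.
Proof. by rewrite -(rmorph0 f) -mpolyC0; apply: adjoinedC. Qed.

Lemma adjoined1 i : adjoined i 1.
Proof. by rewrite -(rmorph1 f) -mpolyC1; apply: adjoinedC. Qed.

Lemma adjoinedN i u : adjoined i u -> adjoined i (- u).
Proof.
rewrite -mulN1r; apply: adjoinedM.
by rewrite -(rmorph1 f) -mpolyC1 -!rmorphN; exact: adjoinedC.
Qed.

Lemma adjoined_vars_below i p : vars_below i p -> adjoined i (f p).
Proof.
move=> p_below T TD TM TC TX.
have T0 : T 0 by move: (TC 0); rewrite mpolyC0 rmorph0.
have T1 : T 1 by move: (TC 1); rewrite mpolyC1 rmorph1.
rewrite rmorph_mpolyE big_seq; apply: (big_ind T) => [//|u v|m m_supp]; first exact: TD.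
apply: (TM) => //.
apply: (big_ind T) => [//|u v|k _]; first exact: TM.
case: (ltnP k i) => [lt_ki | le_ik].
  by elim: (m k) => [|n IHn]; rewrite ?expr0 // exprS; apply: (TM) => //; apply: TX.
by rewrite (p_below m m_supp k le_ik) expr0.
Qed.

Lemma adjoined_all s : adjoined r s.
Proof.
have [p <-] := f_surj s; apply: adjoined_vars_below => m _ k.
by rewrite leqNgt ltn_ord.
Qed.

Lemma adjoined0_const s : adjoined 0 s -> exists c, s = f c%:MP.
Proof.
move=> adj_s; apply: (adj_s (fun s => exists c, s = f c%:MP)).
- by move=> _ _ [c ->] [c' ->]; exists (c + c'); rewrite !rmorphD.
- by move=> _ _ [c ->] [c' ->]; exists (c * c'); rewrite !rmorphM.
- by move=> c; exists c.
- by move=> k; rewrite ltn0.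
Qed.

Section Span.
Variables (j : 'I_r) (d : nat).
Hypotheses (d_gt0 : (0 < d)%N) (gens_j : monic_in_deg j d (gens j)).

Definition spanned (s : S) : Prop :=
  exists g : nat -> S, (forall k, adjoined j (g k)) /\ s = \sum_(k < d) g k * f 'X_j ^+ k.

Lemma spanned_adjoined u : adjoined j u -> spanned u.
Proof.
move=> adj_u; exists (fun k => if k == 0%N then u else 0); split.
  by move=> k; case: eqP => _ //; apply: adjoined0.
rewrite -(prednK d_gt0) big_ord_recl /= expr0 mulr1 big1 ?addr0 // => k _.
by rewrite mul0r.
Qed.

Lemma spannedD s s' : spanned s -> spanned s' -> spanned (s + s').
Proof.
move=> [g [adj_g ->]] [g' [adj_g' ->]]; exists (fun k => g k + g' k); split.
  by move=> k; apply: adjoinedD.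
by rewrite -big_split /=; apply: eq_bigr => k _; rewrite mulrDl.
Qed.

Lemma spanned_scale u s : adjoined j u -> spanned s -> spanned (u * s).
Proof.
move=> adj_u [g [adj_g ->]]; exists (fun k => u * g k); split.
  by move=> k; apply: adjoinedM.
by rewrite mulr_sumr; apply: eq_bigr => k _; rewrite mulrA.
Qed.

Lemma spannedMX s : spanned s -> spanned (s * f 'X_j).
Proof.
have [c [c_below gensE]] := gens_j.
have adj_c k : adjoined j (f (c k)) by apply: adjoined_vars_below.
have Xd : f 'X_j ^+ d = - \sum_(k < d) f (c k) * f 'X_j ^+ k.
  apply/eqP; rewrite -addr_eq0; apply/eqP.
  rewrite -[RHS](f_gens j) gensE rmorphD rmorphXn rmorph_sum; congr (_ + _).
  by apply: eq_bigr => k _; rewrite rmorphM rmorphXn.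
move=> [g [adj_g ->]].
(* Shift the coefficients up by one and rewrite the overflow x_j^d with [Xd]. *)
exists (fun k => (if k is k'.+1 then g k' else 0) - g d.-1 * f (c k)); split.
  move=> k; apply: adjoinedD; first by case: k => [|k] /=; [exact: adjoined0 | exact: adj_g].
  by rewrite -mulNr; apply: adjoinedM (adj_c k); apply: adjoinedN.
rewrite -(prednK d_gt0) in Xd *; set D := d.-1 in Xd *.
rewrite mulr_suml big_ord_recr /= -mulrA -exprSr.
under [RHS]eq_bigr do rewrite mulrBl.
rewrite sumrB big_ord_recl /= mul0r add0r Xd mulrN mulr_sumr; congr (_ - _).
  by apply: eq_bigr => k _; rewrite add0n /bump leq0n add1n -mulrA -exprSr.
by apply: eq_bigr => k _; rewrite mulrA.
Qed.

Lemma spannedM s s' : spanned s -> spanned s' -> spanned (s * s').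
Proof.
move=> [g [adj_g ->]] span_s'.
have span_Xn n : spanned (s' * f 'X_j ^+ n).
  by elim: n => [|n IHn]; rewrite ?expr0 ?mulr1 // exprSr mulrA; apply: spannedMX.
rewrite mulr_suml; apply: big_ind => [|u v|k _]; first by apply: spanned_adjoined; apply: adjoined0.
  exact: spannedD.
by rewrite mulrAC -mulrA; apply: spanned_scale.
Qed.

Lemma spanned_adjoined_succ s : adjoined j.+1 s -> spanned s.
Proof.
move=> adj_s; apply: (adj_s spanned) => [||c|k]; [exact: spannedD | exact: spannedM | |].
  by apply: spanned_adjoined; apply: adjoinedC.
rewrite ltnS leq_eqVlt => /orP [/eqP/val_inj -> | lt_kj].
  by rewrite -[f 'X_j]mul1r; apply: spannedMX; apply: spanned_adjoined; apply: adjoined1.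
by apply: spanned_adjoined => T _ _ _ TX; apply: TX.
Qed.

End Span.

Lemma adjoined_finite : finite_ring R ->
  forall i, (i <= r)%N -> exists L : seq S, forall s, adjoined i s -> s \in L.
Proof.
move=> [sR sRP]; elim=> [_ | i IH lt_ir].
  exists [seq f c%:MP | c <- sR] => s /adjoined0_const [c ->].
  exact: map_f.
have [L LP] := IH (ltnW lt_ir).
have [d d_gt0 gens_i] := gens_monic (Ordinal lt_ir).
have [L' L'P] := finite_span L (f 'X_(Ordinal lt_ir)) d.
exists L' => s /(spanned_adjoined_succ d_gt0 gens_i) [g [adj_g ->]].
by apply: L'P => k; apply: LP.
Qed.

Lemma quotient_finite : finite_ring R -> finite_ring S.
Proof.
move=> R_fin; have [L LP] := adjoined_finite R_fin (leqnn r).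
by exists L => s; apply: LP (adjoined_all s).
Qed.

End TriangularQuotient.

Section Reduction.
Variables (r : nat) (R : comNzRingType) (F : fieldType).
Variables (pi : {rmorphism R -> F}) (mu : 'I_r -> F).

(* The coefficient map of [red] written as [polyC \o pi], for which [mmap] is a
   ring morphism. *)
Lemma redE (j : 'I_r) p :
  red pi mu j p =
  mmap (polyC \o pi) (fun k : 'I_r => if (k < j)%N then (mu k)%:P else if k == j then 'X else 0) p.
Proof. by []. Qed.

Lemma size_red (j : 'I_r) d p : monic_in_deg j d p -> size (red pi mu j p) = d.+1.
Proof.
move=> [c [c_below ->]].
rewrite redE mmap_monic_form eqxx ltnn.
rewrite (eq_bigr (fun k : 'I_d => (mmap pi mu (c k))%:P * 'X^k)) => [|k _].
  by rewrite (sum_polyC_mulXn d (fun k => mmap pi mu (c k))) size_Xn_add_poly.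
congr (_ * _); rewrite [RHS]rmorph_mmap.
by apply: eq_mmap_vars_below (c_below k) _ => l /= ->.
Qed.

Lemma horner_red (j : 'I_r) d p : monic_in_deg j d p -> (red pi mu j p).[mu j] = mmap pi mu p.
Proof.
move=> p_monic; rewrite -horner_evalE redE rmorph_mmap.
transitivity (mmap pi (fun k : 'I_r => if (k < j)%N then mu k else if k == j then mu j else 0) p).
  apply: eq_mmap => k /=; rewrite horner_evalE ?hornerC //.
  by case: ltnP => _; rewrite ?hornerC //; case: eqP => _; rewrite ?hornerX ?horner0.
apply: eq_mmap_monic_in p_monic _ => k le_kj /=; case: ltnP => // le_jk.
have -> : k = j by apply: val_inj; apply: anti_leq; rewrite le_kj.
by rewrite eqxx.
Qed.

End Reduction.

Section LiftX.
Variables (r : nat) (R : comNzRingType).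

Lemma monic_in_liftX (j : 'I_r) (g : {poly R}) : g \is monic -> monic_in j (liftX j g).
Proof.
move=> g_monic; set d := (size g).-1.
have size_g : size g = d.+1 by rewrite prednK // lt0n size_poly_eq0 monic_neq0.
exists d, (fun k => (g`_k)%:MP); split.
  move=> k m; rewrite msuppC; case: eqP => // _; rewrite mem_seq1 => /eqP -> l _.
  by rewrite mnm0E.
rewrite /liftX (@horner_coef_wide _ d.+1) -?size_g ?size_poly // size_g big_ord_recr /=.
rewrite addrC coef_map /= -{1}[d]/(d.+1.-1) -size_g -lead_coefE (monicP g_monic) mul1r.
by congr (_ + _); apply: eq_bigr => k _; rewrite coef_map.
Qed.

Lemma red_liftX (F : fieldType) (pi : {rmorphism R -> F}) (mu : 'I_r -> F) (j : 'I_r)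
    (g : {poly R}) :
  red pi mu j (liftX j g) = map_poly pi g.
Proof.
rewrite redE /liftX (@horner_coef_wide _ (size g)) ?size_poly // rmorph_sum.
rewrite [RHS]/map_poly poly_def; apply: eq_bigr => k _.
by rewrite rmorphM rmorphXn /= mmapX mmap1U ltnn eqxx coef_map /= mmapC mul_polyC.
Qed.

End LiftX.

Section Residue.
Variables (r : nat) (R : comNzRingType) (F : fieldType).
Variables (pi : {rmorphism R -> F}) (mu : 'I_r -> F) (gens : 'I_r -> {mpoly R[r]}).
Hypothesis gens_monic : forall j, monic_in j (gens j).
Hypothesis gens_minpoly :
  forall j : 'I_r, is_minpoly (Fq_adj pi mu j) (red pi mu j (gens j)) (mu j).

Lemma gens_monic_pos j : exists2 d, (0 < d)%N & monic_in_deg j d (gens j).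
Proof.
have [d gens_j] := gens_monic j; have [gens_monic_j _ root_j _] := gens_minpoly j.
exists d => //; rewrite -ltnS -(size_red pi mu gens_j).
exact: root_size_gt1 (monic_neq0 gens_monic_j) root_j.
Qed.

Lemma mmap_gens j : mmap pi mu (gens j) = 0.
Proof.
have [d gens_j] := gens_monic j; have [_ _ root_j _] := gens_minpoly j.
by rewrite -(horner_red pi mu gens_j); apply/eqP.
Qed.

Section ResidueMap.
Variables (S : comPzRingType) (f : {rmorphism {mpoly R[r]} -> S}).
Hypothesis f_surj : forall s, exists p, f p = s.
Hypothesis f_ker : forall p, f p = 0 <-> in_ideal_gen xpredT gens p.

Lemma kernel_gens j : f (gens j) = 0.
Proof.
apply/f_ker; exists (fun k => (k == j)%:R); rewrite (bigD1 j) //= eqxx mul1r big1 ?addr0 //.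
by move=> k /negbTE ->; rewrite mul0r.
Qed.

Lemma preimage_exists s : exists p, f p == s.
Proof. by have [p <-] := f_surj s; exists p. Qed.

Definition residue (s : S) : F := mmap pi mu (xchoose (preimage_exists s)).

Lemma residue_f p : residue (f p) = mmap pi mu p.
Proof.
have /eqP fp' := xchooseP (preimage_exists (f p)).
have /f_ker [coef pE] : f (xchoose (preimage_exists (f p)) - p) = 0 by rewrite rmorphB fp' subrr.
apply/eqP; rewrite -subr_eq0 -rmorphB pE rmorph_sum big1 // => j _.
by rewrite rmorphM /= mmap_gens mulr0.
Qed.

Lemma residue_is_zmod_morphism : zmod_morphism residue.
Proof.
move=> x y; have [p <-] := f_surj x; have [q <-] := f_surj y.
by rewrite -rmorphB !residue_f rmorphB.
Qed.

Lemma residue_is_monoid_morphism : monoid_morphism residue.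
Proof.
split; first by rewrite -(rmorph1 f) residue_f rmorph1.
move=> x y; have [p <-] := f_surj x; have [q <-] := f_surj y.
by rewrite -rmorphM !residue_f rmorphM.
Qed.

HB.instance Definition _ := GRing.isZmodMorphism.Build S F residue residue_is_zmod_morphism.
HB.instance Definition _ := GRing.isMonoidMorphism.Build S F residue residue_is_monoid_morphism.

Lemma residueC c : residue (f c%:MP) = pi c.
Proof. by rewrite residue_f mmapC. Qed.

Lemma residueX k : residue (f 'X_k) = mu k.
Proof. by rewrite residue_f mmapX mmap1U. Qed.

Lemma residue_adjoined i s : adjoined f i s -> Fq_adj pi mu i (residue s).
Proof.
move=> adj_s; apply: (adj_s (fun s => Fq_adj pi mu i (residue s))).
- by move=> u v Ku Kv; rewrite rmorphD; apply: gen_subfieldD.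
- by move=> u v Ku Kv; rewrite rmorphM; apply: gen_subfieldM.
- by move=> c; rewrite residueC; apply: gen_subfield_gen; left; exists c.
- by move=> k lt_ki; rewrite residueX; apply: gen_subfield_gen; right; exists k.
Qed.

Variable a : R.
Hypothesis pi_ker : forall c, pi c = 0 <-> principal a c.
Local Notation abar := (f a%:MP).

Lemma residue_eq0_adjoined i s :
  (i <= r)%N -> adjoined f i s -> residue s = 0 -> principal abar s.
Proof.
elim: i s => [s _ /adjoined0_const [c ->] | i IH s lt_ir].
  by rewrite residueC => /pi_ker [e ->]; exists (f e%:MP); rewrite !rmorphM.
pose j := Ordinal lt_ir; have [d d_gt0 gens_j] := gens_monic_pos j.
move=> /(spanned_adjoined_succ kernel_gens d_gt0 gens_j) [g [adj_g ->]] res_eq0.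
pose P := \poly_(k < d) residue (g k).
have P_eq0 : P = 0.
  apply/eqP; apply: contraT => P_neq0.
  have [_ _ _ /(_ P P_neq0) min_j] := gens_minpoly j.
  rewrite (size_red pi mu gens_j) ltnNge size_poly in min_j; apply: min_j.
    move=> k; rewrite coef_poly; case: ifP => _; last exact: gen_subfield0.
    exact: residue_adjoined (adj_g k).
  rewrite /root horner_poly; apply/eqP; rewrite -[RHS]res_eq0 rmorph_sum.
  apply: eq_bigr => k _.
  by rewrite rmorphM rmorphXn /= residueX.
have [principal0 principalD principalM] := principal_ideal abar.
apply: big_ind => [|u v|k _]; [exact: principal0 | exact: principalD |].
rewrite mulrC; apply: principalM; apply: IH (ltnW lt_ir) (adj_g k) _.
by have := congr1 (fun p : {poly F} => p`_k) P_eq0; rewrite coef_poly ltn_ord coef0.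
Qed.

Lemma residue_eq0 s : residue s = 0 <-> principal abar s.
Proof.
split; first exact: residue_eq0_adjoined (leqnn r) (adjoined_all f_surj s).
have /pi_ker pi_a : principal a a by exists 1; rewrite mul1r.
by move=> [c ->]; rewrite rmorphM /= residueC pi_a mulr0.
Qed.

Lemma one_notin_principal : ~ principal abar 1.
Proof. by move/residue_eq0/eqP; rewrite rmorph1 oner_eq0. Qed.

Hypothesis R_finite : finite_ring R.

Let S_finite : finite_ring S := quotient_finite gens_monic_pos f_surj kernel_gens R_finite.

Lemma residue_image y : (exists s, residue s = y) <-> Fq_adj pi mu r y.
Proof.
split=> [[s <-] | K_y]; first exact: residue_adjoined (adjoined_all f_surj s).
apply: (K_y (fun y => exists s, residue s = y)).
  do ![split]; first by exists 0; rewrite rmorph0.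
  - by exists 1; rewrite rmorph1.
  - by move=> _ _ [u <-] [v <-]; exists (u + v); rewrite rmorphD.
  - by move=> _ [u <-]; exists (- u); rewrite rmorphN.
  - by move=> _ _ [u <-] [v <-]; exists (u * v); rewrite rmorphM.
  - by move=> _ [u <-] /(rmorph_finite_inv S_finite).
move=> _ [[c ->] | [k [_ ->]]]; first by exists (f c%:MP); rewrite residueC.
by exists (f 'X_k); rewrite residueX.
Qed.

Variable t : nat.
Hypothesis a_nil : a ^+ t = 0.

Lemma unit_of_not_principal x : ~ principal abar x -> exists v, x * v = 1.
Proof.
move=> x_notin; have res_x : residue x != 0 by apply/eqP => /residue_eq0.
have [v res_v] := rmorph_finite_inv S_finite res_x.
have /residue_eq0 [e xvE] : residue (1 - x * v) = 0.
  by rewrite rmorphB rmorphM rmorph1 res_v mulfV // subrr.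
have [w ea_unit] : exists w, (1 - e * abar) * w = 1.
  apply: (one_sub_nilpotent_unit (t := t)).
  by rewrite exprMn -!rmorphXn a_nil !rmorph0 mulr0.
have xv : x * v = 1 - e * abar by rewrite -xvE subKr.
by exists (v * w); rewrite mulrA xv.
Qed.

Lemma residue_field : exists phi : {rmorphism S -> F},
  (forall s, phi s = 0 <-> principal abar s) /\
  (forall y, (exists s, phi s = y) <-> Fq_adj pi mu r y).
Proof. by exists residue; split; [exact: residue_eq0 | exact: residue_image]. Qed.

End ResidueMap.
End Residue.

Theorem mainTheorem1
  (* R : finite commutative chain ring, maximal ideal M = <a>, a of
     nilpotency index t *)
  (R : comNzRingType) (a : R) (t : nat)
  (hR : chain_ring R)
  (hM : is_maximal_ideal (principal a))
  (ht : a ^+ t = 0) (ht' : forall k, (k < t)%N -> a ^+ k != 0)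
  (* F : an algebraic closure of the residue field F_q = R/M, with
     pi : R -> R/M -> F the reduction map *)
  (F : closedFieldType) (pi : {rmorphism R -> F})
  (hpi : forall c, pi c = 0 <-> principal a c)
  (hFalg : forall x : F, exists g : {poly R},
      map_poly pi g != 0 /\ root (map_poly pi g) x)
  (* r variables; t_i monic with square-free reduction, mu_i root of it *)
  (r : nat) (hr : (0 < r)%N)
  (tp : 'I_r -> {poly R})
  (htmon : forall i, tp i \is monic)
  (htsq : forall i (x : F), ~~ (('X - x%:P) ^+ 2 %| map_poly pi (tp i)))
  (mu : 'I_r -> F)
  (hmu : forall i, root (map_poly pi (tp i)) (mu i))
  (* q_{mu,i} : the monic factor of t_i reducing to p_{mu,i} *)
  (q : 'I_r -> {poly R})
  (hqmon : forall i, q i \is monic)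
  (hqdvd : forall i, exists s : {poly R}, tp i = q i * s)
  (hqred : forall i, is_minpoly (Fq_adj pi mu 0) (map_poly pi (q i)) (mu i))
  (* z_{mu,i}, sigma_{mu,i} for i >= 2 (0-based: i >= 1), lifted to R[X] *)
  (z sig : 'I_r -> {mpoly R[r]}) :
  let gens := fun j : 'I_r =>
    if val j == 0%N then liftX j (q j) else z j in
  let J := fun i : nat => in_ideal_gen (fun j : 'I_r => (j < i)%N) gens in
  (forall i : 'I_r, (0 < i)%N ->
     [/\ monic_in i (z i), monic_in i (sig i),
         J i (liftX i (q i) - z i * sig i),
         (exists A B, J i (A * z i + B * sig i - 1)) &
         is_minpoly (Fq_adj pi mu i) (red pi mu i (z i)) (mu i) /\
         red pi mu i (sig i) = map_poly pi (q i) %/ red pi mu i (z i)]) ->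
  (* I_mu = <q_{mu,1}, z_{mu,2}, ..., z_{mu,r}> ; S = R[X]/I_mu, given by
     a surjective ring morphism f with kernel I_mu *)
  let I := in_ideal_gen (fun _ => true) gens in
  forall (S : comPzRingType) (f : {rmorphism {mpoly R[r]} -> S}),
  (forall y : S, exists p, f p = y) ->
  (forall p, f p = 0 <-> I p) ->
  let abar := f (a%:MP) in
  [/\ chain_ring S,
      is_maximal_ideal (principal abar),
      (exists phi : {rmorphism S -> F},
          (forall x, phi x = 0 <-> principal abar x) /\
          (forall y, (exists x, phi x = y) <-> Fq_adj pi mu r y)),
      (abar ^+ t = 0 /\
       forall k, (k < t)%N -> ~ principal (abar ^+ k.+1) (abar ^+ k)) &
      (forall K, is_ideal K -> exists k, (k <= t)%N /\
                                ideal_eq K (principal (abar ^+ k)))].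
Proof.
move=> gens J gens_spec I S f f_surj f_ker abar.
have gens_monic (j : 'I_r) : monic_in j (gens j).
  rewrite /gens; case: eqP => [_ | /eqP]; first exact: monic_in_liftX.
  by rewrite -lt0n => /gens_spec [].
have gens_minpoly (j : 'I_r) : is_minpoly (Fq_adj pi mu j) (red pi mu j (gens j)) (mu j).
  rewrite /gens; case: eqP => [j0 | /eqP]; first by rewrite red_liftX j0.
  by rewrite -lt0n => /gens_spec [_ _ _ _ []].
have R_finite : finite_ring R by case: hR.
have abar_nil : abar ^+ t = 0 by rewrite -!rmorphXn ht !rmorph0.
have abar_proper := one_notin_principal gens_monic gens_minpoly f_surj f_ker hpi.
have abar_units := unit_of_not_principal gens_monic gens_minpoly f_surj f_ker hpi R_finite ht.
split.
- exact: principal_chain_ring abar_nil abar_proper abar_units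
    (quotient_finite (gens_monic_pos gens_monic gens_minpoly) f_surj (kernel_gens f_ker) R_finite).
- exact: principal_maximal abar_proper abar_units.
- exact (residue_field gens_monic gens_minpoly f_surj f_ker hpi R_finite).
- split=> // k lt_kt /(principal_exp_succ_eq0 abar_proper abar_units).
  rewrite -!rmorphXn => /f_ker /(constant_in_ideal_eq0 (gens_monic_pos gens_monic gens_minpoly)).
  by apply/eqP; apply: ht'.
- exact: ideals_principal_exp abar_nil abar_units.
Qed.
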